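(* Let $S\subset\mathbb{P}^3$ be a smooth cubic surface defined by a cubic form with real coefficients, and let $U_1,U_2$ be self-adjoint determinantal representations of $S$. Then $U_1$ and $U_2$ are equivalent if and only if $U_1$ is hermitean equivalent to either $U_2$ or $-U_2$.
   Context: Work over $\mathbb{C}$. A determinantal representation of $S$ (defined by $F$) is a $3\times3$ matrix of linear forms $U=z_0U_0+\dots+z_3U_3$, $U_i\in\operatorname{Mat}_3(\mathbb{C})$, with $\det U=cF$, $c\neq 0$; it is self-adjoint if each $U_i$ is Hermitian. Two determinantal representations $M,M'$ are equivalent if $M'=XMY$ for some $X,Y\in\operatorname{GL}_3(\mathbb{C})$. Two self-adjoint representations $U,U'$ are hermitean equivalent if $U'=XUX^{\ast}$ for some $X\in\operatorname{GL}_3(\mathbb{C})$. *)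

From mathcomp Require Import all_boot all_algebra.
From mathcomp Require Import reals.
From mathcomp.real_closed Require Import complex.
From mathcomp Require Import mpoly.
Set Implicit Arguments. Unset Strict Implicit. Unset Printing Implicit Defensive.
Import GRing.Theory Num.Theory.
Local Open Scope ring_scope.

(* A 3x3 matrix of linear forms z_0 U_0 + ... + z_3 U_3, given by its
   coefficient matrices U : 'I_4 -> 'M[C]_3, as a matrix over C[z_0..z_3]. *)
Definition linmx (C : comRingType) (U : 'I_4 -> 'M[C]_3) : 'M[{mpoly C[4]}]_3 :=
  \matrix_(j, k) \sum_(i < 4) (U i j k)%:MP * 'X_i.

Definition cstmx (C : comRingType) (X : 'M[C]_3) : 'M[{mpoly C[4]}]_3 :=
  map_mx (fun c => c%:MP) X.

Definition adjC (C : numClosedFieldType) (X : 'M[C]_3) : 'M[C]_3 :=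
  (map_mx (@Num.conj C) X)^T.

Definition real_cubic_form (C : numClosedFieldType) (F : {mpoly C[4]}) : Prop :=
  F \is 3.-homog /\ forall m, (F@_m)^* = F@_m.

(* the surface S = V(F) in P^3 is smooth: the partial derivatives of F have
   no common zero in C^4 \ {0} (F itself vanishes there by Euler's formula) *)
Definition smooth_surface (C : numClosedFieldType) (F : {mpoly C[4]}) : Prop :=
  forall v : 'I_4 -> C, (forall i : 'I_4, (mderiv i F).@[v] = 0) -> v = (fun _ => 0).

Definition det_rep (C : comUnitRingType) (F : {mpoly C[4]}) (U : 'I_4 -> 'M[C]_3) : Prop :=
  exists c : C, c != 0 /\ \det (linmx U) = c *: F.

Definition self_adjoint (C : numClosedFieldType) (U : 'I_4 -> 'M[C]_3) : Prop :=
  forall i, adjC (U i) = U i.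

Definition rep_equiv (C : comUnitRingType) (M M' : 'I_4 -> 'M[C]_3) : Prop :=
  exists X Y : 'M[C]_3, X \in unitmx /\ Y \in unitmx /\
    linmx M' = cstmx X *m linmx M *m cstmx Y.

Definition herm_equiv (C : numClosedFieldType) (U U' : 'I_4 -> 'M[C]_3) : Prop :=
  exists X : 'M[C]_3, X \in unitmx /\
    linmx U' = cstmx X *m linmx U *m cstmx (adjC X).

From mathcomp Require Import all_boot all_algebra.
From mathcomp Require Import reals.
From mathcomp.real_closed Require Import complex.
From mathcomp Require Import mpoly.
From mathcomp Require Import zify.
Set Implicit Arguments. Unset Strict Implicit. Unset Printing Implicit Defensive.
Import GRing.Theory Num.Theory.
Local Open Scope ring_scope.

(* Smoothness makes every determinantal representation U irreducible in the
   following sense: for u != 0 the rows u U_0, ..., u U_3 span at least a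
   plane.  Otherwise, after a change of bases, the first row of
   U(z) = z_0 U_0 + ... + z_3 U_3 becomes (l(z), 0, 0), so det U(z) is
   l(z) times a minor whose first row is (U_22(z), U_23(z)); the three
   linear forms l, U_22, U_23 have a common nonzero zero in C^4, at which the
   gradient of det U = c F vanishes.  By a rank count this gives Schur's
   lemma: A U_i = U_i B for all i forces A to be scalar.
   If now U_2 = X U_1 Y with U_1, U_2 self-adjoint, then also
   U_2 = Y^* U_1 X^*, so (Y^-1)^* X intertwines U_1 and equals some l, i.e.
   U_2 = l Y^* U_1 Y; self-adjointness forces l to be real, and rescaling
   Y by sqrt |l| gives a hermitean equivalence with U_1 or -U_1. *)

Section LinearMatrices.
Variable C : comNzRingType.
Implicit Types (U V : 'I_4 -> 'M[C]_3) (X Y : 'M[C]_3).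

Lemma linmx_eval U j k (z : 'I_4 -> C) :
  (linmx U j k).@[z] = \sum_i U i j k * z i.
Proof.
rewrite mxE (big_morph (meval z) (mevalD z) (meval0 z)); apply: eq_bigr => i _.
by rewrite mevalM mevalC mevalXU.
Qed.

Lemma linmx_inj U V : linmx U = linmx V -> forall i, U i = V i.
Proof.
move=> UV i; apply/matrixP => j k.
have eval_delta (W : 'I_4 -> 'M[C]_3) : (linmx W j k).@[fun l => (l == i)%:R] = W i j k.
  rewrite linmx_eval (bigD1 i) //= eqxx mulr1 big1 ?addr0 // => l /negbTE ->.
  exact: mulr0.
by rewrite -eval_delta UV eval_delta.
Qed.

Lemma eq_linmx U V : (forall i, U i = V i) -> linmx U = linmx V.
Proof. by move=> UV; apply/matrixP => j k; rewrite !mxE; apply: eq_bigr => i _; rewrite UV. Qed.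

Lemma cstmxM X Y : cstmx (X *m Y) = cstmx X *m cstmx Y.
Proof. exact: (map_mxM (mpolyC 4 (R:=C))). Qed.

Lemma det_cstmx X : \det (cstmx X) = (\det X)%:MP.
Proof. exact: (det_map_mx (mpolyC 4 (R:=C))). Qed.

Lemma linmx_conj U X Y :
  cstmx X *m linmx U *m cstmx Y = linmx (fun i => X *m U i *m Y).
Proof.
have linmxE W : linmx W = \sum_i 'X_i *: cstmx (W i).
  by apply/matrixP => j k; rewrite mxE summxE; apply: eq_bigr => i _; rewrite !mxE mulrC.
rewrite !linmxE mulmx_sumr mulmx_suml; apply: eq_bigr => i _.
by rewrite -scalemxAr -scalemxAl !cstmxM.
Qed.

End LinearMatrices.

Lemma det_row0_split (R : comNzRingType) n (E : 'M[R]_n.+1) :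
  (forall k, k != 0 -> E 0 k = 0) -> \det E = E 0 0 * cofactor E 0 0.
Proof.
move=> E0; rewrite (expand_det_row _ 0) big_ord_recl big1 ?addr0 // => j _.
by rewrite E0 ?mul0r // eq_sym neq_lift.
Qed.

Lemma mderivM_eq0 (R : comNzRingType) n (p q : {mpoly R[n]}) v i :
  p.@[v] = 0 -> q.@[v] = 0 -> (mderiv i (p * q)).@[v] = 0.
Proof. by move=> p0 q0; rewrite mderivM mevalD !mevalM p0 q0 mulr0 mul0r addr0. Qed.

Section LinearAlgebra.
Variable K : fieldType.

Lemma left_kernel_neq0 m n (A : 'M[K]_(m, n)) :
  (\rank A < m)%N -> exists2 u : 'rV_m, u != 0 & u *m A = 0.
Proof.
move=> rA; have : kermx A != 0 by rewrite -mxrank_eq0 mxrank_ker subn_eq0 -ltnNge.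
by case/rowV0Pn => u /sub_kermxP uA u0; exists u.
Qed.

Lemma rank_le1_factor m n (A : 'M[K]_(m, n)) :
  (\rank A <= 1)%N -> exists t : 'cV_m, exists w : 'rV_n, A = t *m w.
Proof.
have [->|/rowV0Pn [w wA w0] rA] := eqVneq A 0; first by exists 0, 0; rewrite mul0mx.
have /submxP [t ->] : (A <= w)%MS.
  have := mxrankS wA; rewrite rank_rV w0 => rA1.
  rewrite -(mxrank_leqif_sup wA).2 rank_rV w0 eqn_leq rA1; exact: rA.
by exists t, w.
Qed.

Lemma row0_ebase n (w : 'rV[K]_n.+1) : exists a, w = a *: row 0 (row_ebase w).
Proof.
exists (col_ebase w 0 0 * (0 < \rank w)%:R); apply/rowP => k.
rewrite -{1}(mulmx_ebase w) !mxE (bigD1 0) //= big1 ?addr0.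
  by rewrite !mxE big_ord1 !mxE.
move=> b b0; rewrite !mxE big_ord1 !mxE.
by rewrite (_ : (0 == b :> nat) = false) ?mulr0 ?mul0r //; apply/negbTE; rewrite eq_sym.
Qed.

End LinearAlgebra.

Section Equivalences.
Variable C : fieldType.
Implicit Types (U V : 'I_4 -> 'M[C]_3).

Lemma rep_equivE U V :
  rep_equiv U V <->
  exists X Y, [/\ X \in unitmx, Y \in unitmx & forall i, V i = X *m U i *m Y].
Proof.
split=> [[X [Y [Xu [Yu UV]]]] | [X [Y [Xu Yu UV]]]]; exists X, Y.
  by rewrite linmx_conj in UV; split=> //; exact: linmx_inj UV.
by do 2!split=> //; rewrite linmx_conj; apply: eq_linmx.
Qed.

Lemma rep_equiv_sym U V : rep_equiv U V -> rep_equiv V U.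
Proof.
case/rep_equivE => X [Y [Xu Yu UV]]; apply/rep_equivE.
exists (invmx X), (invmx Y); split; rewrite ?unitmx_inv // => i.
by rewrite UV !mulmxA mulVmx // mul1mx -mulmxA mulmxV ?mulmx1.
Qed.

Lemma rep_equivNl U V : rep_equiv (fun i => - U i) V -> rep_equiv U V.
Proof.
case/rep_equivE => X [Y [Xu Yu UV]]; apply/rep_equivE.
exists X, (- Y); split=> // [|i]; first by rewrite -scaleN1r unitmxZ ?unitrN1.
by rewrite UV /= !mulmxN mulNmx.
Qed.

Lemma det_rep_conj (F : {mpoly C[4]}) U P Q :
  det_rep F U -> P \in unitmx -> Q \in unitmx ->
  det_rep F (fun i => P *m U i *m Q).
Proof.
case=> c [c0 detU] Pu Qu; exists (\det P * c * \det Q); split.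
  by rewrite !mulf_neq0 // -unitfE -unitmxE.
rewrite -linmx_conj !det_mulmx !det_cstmx detU mulrC !mul_mpolyC !scalerA.
by rewrite -mulrA mulrC.
Qed.

End Equivalences.

Section Adjoint.
Variable C : numClosedFieldType.
Implicit Types (U V : 'I_4 -> 'M[C]_3) (A B P : 'M[C]_3).

Lemma adjCM A B : adjC (A *m B) = adjC B *m adjC A.
Proof. by rewrite /adjC map_mxM trmx_mul. Qed.

Lemma adjCK A : adjC (adjC A) = A.
Proof. by apply/matrixP => i j; rewrite !mxE conjCK. Qed.

Lemma adjCZ a A : adjC (a *: A) = a^* *: adjC A.
Proof. by apply/matrixP => i j; rewrite !mxE rmorphM. Qed.

Lemma unitmx_adjC A : (adjC A \in unitmx) = (A \in unitmx).
Proof. by rewrite /adjC unitmx_tr map_unitmx. Qed.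

Lemma herm_equivE U V :
  herm_equiv U V <->
  exists2 X, X \in unitmx & forall i, V i = X *m U i *m adjC X.
Proof.
split=> [[X [Xu UV]] | [X Xu UV]]; exists X => //.
  by rewrite linmx_conj in UV; exact: linmx_inj UV.
by split=> //; rewrite linmx_conj; apply: eq_linmx.
Qed.

Lemma herm_equiv_rep_equiv U V : herm_equiv U V -> rep_equiv U V.
Proof.
case/herm_equivE => X Xu UV; apply/rep_equivE.
by exists X, (adjC X); rewrite unitmx_adjC.
Qed.

Lemma herm_equiv_realZ U V P r :
  P \in unitmx -> r \is Num.real -> r != 0 ->
  (forall i, V i = r *: (P *m U i *m adjC P)) ->
  herm_equiv U V \/ herm_equiv (fun i => - U i) V.
Proof.
move=> Pu rR r0 VU; set s := sqrtC `|r|.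
have sR : s^* = s by rewrite geC0_conj // sqrtC_ge0.
have ss : s * s^* = `|r| by rewrite sR -expr2 sqrtCK.
have s0 : s != 0 by rewrite sqrtC_eq0 normr_eq0.
have scaled W : (forall i, V i = `|r| *: (P *m W i *m adjC P)) -> herm_equiv W V.
  move=> VW; apply/herm_equivE; exists (s *: P); first by rewrite unitmxZ ?unitfE.
  by move=> i; rewrite VW adjCZ -!scalemxAl -scalemxAr scalerA ss.
case/orP: (rR) => [r_ge0 | r_le0]; [left | right]; apply: scaled => i /=.
  by rewrite ger0_norm.
by rewrite ler0_norm // VU mulmxN mulNmx scaleNr scalerN opprK.
Qed.

End Adjoint.

Definition linrow (R : pzRingType) (U : 'I_4 -> 'M[R]_3) (u : 'rV[R]_3) : 'M[R]_(4, 3) :=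
  \matrix_i (u *m U i).

Lemma linrowM (R : pzRingType) (U : 'I_4 -> 'M[R]_3) N M u :
  (forall i, N *m U i = U i *m M) -> linrow U (u *m N) = linrow U u *m M.
Proof. by move=> NM; apply/row_matrixP => i; rewrite row_mul !rowK -mulmxA NM mulmxA. Qed.

Section SmoothSurfaces.
Variables (C : numClosedFieldType) (F : {mpoly C[4]}).
Hypothesis smoothF : smooth_surface F.
Implicit Types (U V : 'I_4 -> 'M[C]_3).

Lemma det_rep_row0_nonsplit V :
  det_rep F V -> ~ (forall i (k : 'I_3), k != 0 -> V i 0 k = 0).
Proof.
move=> [c [c0 detV]] V0; set E := linmx V.
pose K : 'M[C]_(4, 3) := \matrix_(i, k) (if k == 0 then V i 0 0 else V i 1 k).
have [z z0 zK] : exists2 z : 'rV_4, z != 0 & z *m K = 0.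
  by apply: left_kernel_neq0; rewrite (leq_ltn_trans (rank_leq_col K)).
pose v : 'I_4 -> C := fun i => z 0 i.
have evalE j k : (E j k).@[v] = (z *m K) 0 k -> (E j k).@[v] = 0.
  by move=> ->; rewrite zK mxE.
have E00 : (E 0 0).@[v] = 0.
  by apply: evalE; rewrite linmx_eval !mxE; apply: eq_bigr => i _; rewrite mxE eqxx mulrC.
have E1 k : k != 0 -> (E 1 k).@[v] = 0.
  move=> k0; apply: evalE; rewrite linmx_eval !mxE; apply: eq_bigr => i _.
  by rewrite mxE (negbTE k0) mulrC.
have cof0 : (cofactor E 0 0).@[v] = 0.
  rewrite /cofactor mevalM -(det_map_mx (meval v)) (expand_det_row _ 0) big1 ?mulr0 //.
  move=> j _; have -> : map_mx (meval v) (row' 0 (col' 0 E)) 0 j = (E 1 (lift 0 j)).@[v].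
    by rewrite !mxE (_ : lift 0 0 = 1 :> 'I_3) //; exact: val_inj.
  by rewrite E1 ?mul0r // eq_sym neq_lift.
have detE : \det E = E 0 0 * cofactor E 0 0.
  apply: det_row0_split => k k0; rewrite mxE big1 // => i _.
  by rewrite V0 // mpolyC0 mul0r.
have /smoothF v0 : forall i, (mderiv i F).@[v] = 0.
  move=> i; have -> : F = c^-1 *: \det E by rewrite detV scalerA mulVf ?scale1r.
  by rewrite mderivZ mevalZ detE mderivM_eq0 ?mulr0.
by move/eqP: z0; apply; apply/rowP => i; rewrite mxE; exact: (congr1 (fun f => f i) v0).
Qed.

Lemma linrow_rank_gt1 U u : det_rep F U -> u != 0 -> (1 < \rank (linrow U u))%N.
Proof.
move=> repU u0; rewrite ltnNge; apply/negP => /rank_le1_factor [t [w Wtw]].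
have [a ua] := row0_ebase u; have [b wb] := row0_ebase w.
set P := row_ebase u in ua; set Q := row_ebase w in wb.
have a0 : a != 0 by apply: contraNneq u0 => a0; rewrite ua a0 scale0r.
have Qu : Q \in unitmx := row_ebase_unit w.
have repV : det_rep F (fun i => P *m U i *m invmx Q).
  by apply: det_rep_conj; rewrite ?row_ebase_unit ?unitmx_inv.
apply: (det_rep_row0_nonsplit repV) => i k k0.
have rowV : a *: row 0 (P *m U i *m invmx Q) = (t i 0 * b) *: row 0 1%:M.
  rewrite !row_mul !scalemxAl -ua.
  have -> : u *m U i = row i (t *m w) by rewrite -Wtw rowK.
  rewrite row_mul [row i t]mx11_scalar mul_scalar_mx mxE wb scalerA.
  by rewrite -scalemxAl -row_mul mulmxV.
move/(congr1 (fun r : 'rV_3 => r 0 k)): rowV; rewrite !mxE eq_sym (negbTE k0).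
by rewrite mulr0 => /eqP; rewrite mulf_eq0 (negbTE a0) => /eqP.
Qed.

Lemma det_rep_neq0 U : det_rep F U -> exists i, U i != 0.
Proof.
move=> repU; have u0 : delta_mx 0 0 != 0 :> 'rV[C]_3.
  by apply/eqP => /matrixP/(_ 0 0)/eqP; rewrite !mxE eqxx oner_eq0.
apply/existsP; apply: contraTT (linrow_rank_gt1 repU u0) => /existsPn U0.
have -> : linrow U (delta_mx 0 0) = 0.
  by apply/row_matrixP => i; rewrite rowK (eqP (negbNE (U0 i))) mulmx0 row0.
by rewrite mxrank0.
Qed.

Lemma intertwiner_rank_le1 U N M (v : 'rV_3) :
  det_rep F U -> (forall i, N *m U i = U i *m M) -> v != 0 -> v *m N = 0 ->
  (\rank M <= 1)%N.
Proof.
move=> repU NM v0 vN.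
have := mxrank_mul_min (linrow U v) M; rewrite -(linrowM _ NM) vN.
have -> : linrow U 0 = 0 by apply/row_matrixP => i; rewrite rowK mul0mx row0.
by have := linrow_rank_gt1 repU v0; rewrite mxrank0; lia.
Qed.

Lemma intertwiner_scalar U A B :
  det_rep F U -> (forall i, A *m U i = U i *m B) -> exists l, A = l%:M.
Proof.
move=> repU AB; have [l] : exists l, eigenvalue A l.
  have /closed_rootP [l] : size (char_poly A) != 1%N by rewrite size_char_poly.
  by exists l; rewrite eigenvalue_root_char.
case/eigenvalueP => v vA v0; exists l; apply/eqP; rewrite -subr_eq0.
apply/negPn/negP => /rowV0Pn [_ /submxP [u ->] uN0].
have NM i : (A - l%:M) *m U i = U i *m (B - l%:M).
  by rewrite mulmxBl mulmxBr AB mul_scalar_mx mul_mx_scalar.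
have M1 : (\rank (B - l%:M)%R <= 1)%N.
  by apply: (intertwiner_rank_le1 repU NM v0); rewrite mulmxBr vA mul_mx_scalar subrr.
have := linrow_rank_gt1 repU uN0; rewrite (linrowM _ NM) ltnNge.
by rewrite (leq_trans (mxrankM_maxr _ _) M1).
Qed.

Lemma rep_equiv_herm_equiv U V :
  det_rep F U -> self_adjoint U -> self_adjoint V -> rep_equiv U V ->
  herm_equiv U V \/ herm_equiv (fun i => - U i) V.
Proof.
move=> repU saU saV /rep_equivE [X [Y [Xu Yu UV]]].
have Y'u : adjC Y \in unitmx by rewrite unitmx_adjC.
have [l Xl] : exists l, invmx (adjC Y) *m X = l%:M.
  apply: (intertwiner_scalar repU (B := adjC X *m invmx Y)) => i.
  have UVadj : adjC Y *m U i *m adjC X = X *m U i *m Y.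
    by have := saV i; rewrite UV !adjCM saU mulmxA.
  by rewrite -mulmxA -(mulmxK Yu (X *m U i)) -UVadj !mulmxA mulVmx // mul1mx.
have XY : X = l *: adjC Y by rewrite -[X](mulKVmx Y'u) Xl mul_mx_scalar.
have l0 : l != 0.
  by apply: contraTneq Xu => l0; rewrite XY l0 scale0r unitmxE det0 unitr0.
have VU i : V i = l *: (adjC Y *m U i *m Y) by rewrite UV XY -!scalemxAl.
have [i Ui0] := det_rep_neq0 repU.
have K0 : adjC Y *m U i *m Y != 0.
  apply: contraNneq Ui0 => K0.
  by rewrite -[U i](mulKmx Y'u) -[adjC Y *m U i](mulmxK Yu) K0 mul0mx mulmx0.
have lR : l \is Num.real.
  have := saV i; rewrite CrealE VU adjCZ !adjCM adjCK saU mulmxA => /eqP.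
  by rewrite -subr_eq0 -scalerBl scalemx_eq0 (negbTE K0) orbF subr_eq0.
by apply: (herm_equiv_realZ Y'u lR l0) => j; rewrite adjCK VU.
Qed.

End SmoothSurfaces.

Unset Implicit Arguments.

Theorem mainTheorem11 (R : realType) (F : {mpoly R[i][4]})
  (U1 U2 : 'I_4 -> 'M[R[i]]_3) :
  real_cubic_form F -> smooth_surface F ->
  det_rep F U1 -> self_adjoint U1 ->
  det_rep F U2 -> self_adjoint U2 ->
  (rep_equiv U1 U2 <->
   (herm_equiv U2 U1 \/ herm_equiv (fun k => - U2 k) U1)).
Proof.
move=> _ smoothF _ saU1 repU2 saU2; split.
  by move/rep_equiv_sym; exact: (rep_equiv_herm_equiv smoothF repU2 saU2 saU1).
by case=> [/herm_equiv_rep_equiv | /herm_equiv_rep_equiv/rep_equivNl]; exact: rep_equiv_sym.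
Qed.
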